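(* Let $\mathcal V=\{v^{(1)},\dots,v^{(p)}\}\subset(\mathbb{R}\cup\{-\infty\})^n$ be a finite set, $V$ the matrix with columns $v^{(k)}$, with no row and no column identically $-\infty$, and let $$T_i(x)=\inf_{k\in[p],\,V_{ik}\neq-\infty}\Big[-V_{ik}+\max_{j\in[n],\,j\neq i}(V_{jk}+x_j)\Big],\qquad i\in[n].$$ Let $W=\max_{v\in\mathcal V}\|v\|_H$. Then any finite eigenvector $u\in\mathbb{R}^n$ of $T$ (i.e. $T(u)=\lambda+u$ for some $\lambda$) satisfies $\|u\|_H\le W$.
   Context: $-\infty+c=-\infty$, $\max\emptyset=-\infty$. Hilbert's seminorm: $\|x\|_H=\max_i x_i-\min_i x_i$ (equal to $+\infty$ if some but not all entries are $-\infty$). *)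

From HB Require Import structures.
From mathcomp Require Import all_boot all_order all_algebra.
From mathcomp Require Import all_classical all_reals ereal.
Set Implicit Arguments. Unset Strict Implicit. Unset Printing Implicit Defensive.
Import Order.TTheory GRing.Theory Num.Theory.
Local Open Scope ring_scope.
Local Open Scope ereal_scope.

(* Entries in R ∪ {-oo} are modelled in \bar R (mathcomp-analysis extended
   reals), with the standing hypothesis that no entry equals +oo.
   In \bar R, -oo + c = -oo, and the empty max is -oo. *)

(* Hilbert seminorm of a vector with entries in R ∪ {-oo}:
   max_i v_i - min_i v_i; equals +oo when some but not all entries are -oo. *)
Definition hilbert (R : realType) (n : nat) (v : 'I_n -> \bar R) : \bar R :=
  \big[maxe/-oo]_(i < n) v i - \big[mine/+oo]_(i < n) v i.

Definition Top (R : realType) (n p : nat) (V : 'M[\bar R]_(n, p))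
    (x : 'I_n -> R) (i : 'I_n) : \bar R :=
  \big[mine/+oo]_(k < p | V i k != -oo)
     (- V i k + \big[maxe/-oo]_(j < n | j != i) (V j k + (x j)%:E)).

Definition Wmax (R : realType) (n p : nat) (V : 'M[\bar R]_(n, p)) : \bar R :=
  \big[maxe/-oo]_(k < p) hilbert (fun i => V i k).

From HB Require Import structures.
From mathcomp Require Import all_boot all_order all_algebra.
From mathcomp Require Import all_classical all_reals ereal.
From mathcomp Require Import lra.
Set Implicit Arguments. Unset Strict Implicit. Unset Printing Implicit Defensive.
Import Order.TTheory GRing.Theory Num.Theory.
Local Open Scope ring_scope.
Local Open Scope ereal_scope.

(* Let [u] be an eigenvector with eigenvalue [lambda], attaining its maximum
   at [M] and its minimum at [m].  For any column [k], a row [i] maximising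
   [V i k + u i] gives [T_i(u) <= u_i], hence [lambda <= 0].  A column [k]
   attaining the infimum defining [T_m(u)] gives
   [lambda + u_m >= - V m k + V M k + u_M], i.e.
   [u_M - u_m <= V m k - V M k <= ||V_k||_H <= W]. *)

Lemma hilbert_ge (R : realType) (n : nat) (v : 'I_n -> \bar R) (i j : 'I_n) :
  v i - v j <= hilbert v.
Proof. by apply: leeB; [exact: (bigmax_sup i) | exact: (bigmin_inf j)]. Qed.

Section EigenvectorOfTop.
Variables (R : realType) (n p : nat) (V : 'M[\bar R]_(n, p)).
Hypothesis Vfin : forall i k, V i k != +oo.

Lemma hilbert_col_le_Wmax (k : 'I_p) : hilbert (fun i => V i k) <= Wmax V.
Proof. exact: (bigmax_sup k). Qed.

Lemma col_argmax (x : 'I_n -> R) (k : 'I_p) :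
  (exists i, V i k != -oo) ->
  exists2 i, V i k != -oo & forall j, V j k + (x j)%:E <= V i k + (x i)%:E.
Proof.
move=> [i0 Vi0]; have [i _ Hi] := eq_bigmax i0 xpredT
  (fun j => V j k + (x j)%:E) isT (fun j _ => leNye _).
have le_i j : V j k + (x j)%:E <= V i k + (x i)%:E.
  by rewrite -Hi; exact: le_bigmax.
exists i => //; apply: contraTneq (le_i i0) => ->.
by move: Vi0 (Vfin i0 k); case: (V i0 k).
Qed.

Lemma Top_le_argmax (x : 'I_n -> R) (i : 'I_n) (k : 'I_p) :
  V i k != -oo -> (forall j, V j k + (x j)%:E <= V i k + (x i)%:E) ->
  Top V x i <= (x i)%:E.
Proof.
move=> Vik le_i; have := Vfin i k; move: Vik le_i.
rewrite /Top; case E: (V i k) => [r| |] // _ le_i _.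
apply: le_trans (_ : - r%:E + (r + x i)%R%:E <= _); last first.
  by rewrite -EFinN -EFinD addKr.
apply: (@bigmin_inf _ _ _ _ k); first by rewrite E.
rewrite E; apply: leeD2l; apply: bigmax_le => [|j _]; first exact: leNye.
by rewrite EFinD; exact: le_i.
Qed.

Lemma eigenvalue_nonpos (x : 'I_n -> R) (lambda : R) (k : 'I_p) :
  (exists i, V i k != -oo) ->
  (forall i, Top V x i = (lambda + x i)%:E) -> (lambda <= 0)%R.
Proof.
move=> /(col_argmax x) [i Vik le_i] Heig.
have := Top_le_argmax Vik le_i; rewrite Heig lee_fin; lra.
Qed.

Lemma Top_argmin (x : 'I_n -> R) (i : 'I_n) :
  (exists k, V i k != -oo) ->
  exists2 k, V i k != -oo &
    Top V x i = - V i k + \big[maxe/-oo]_(j < n | j != i) (V j k + (x j)%:E).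
Proof.
move=> [k0 Vik0]; have [k Vik Hk] := eq_bigmin k0 (fun k => V i k != -oo)
  (fun k => - V i k + \big[maxe/-oo]_(j < n | j != i) (V j k + (x j)%:E))
  Vik0 (fun _ _ => leey _).
by exists k.
Qed.

Lemma eigenvector_gap_le (x : 'I_n -> R) (lambda : R) (i j : 'I_n) (k : 'I_p) :
  (lambda <= 0)%R -> Top V x i = (lambda + x i)%:E -> V i k != -oo ->
  Top V x i = - V i k + \big[maxe/-oo]_(l < n | l != i) (V l k + (x l)%:E) ->
  (x j)%:E - (x i)%:E <= V i k - V j k.
Proof.
move=> lam0 Heig Vik HT; have := Vfin i k; move: Vik HT.
case Ei: (V i k) => [r| |] // _ HT _.
have [->|ji] := eqVneq j i; first by rewrite Ei -!EFinB !subrr.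
have := Vfin j k; case Ej: (V j k) => [s| |] // _; last by rewrite leey.
have : (- r + (s + x j))%R%:E <= (lambda + x i)%:E.
  rewrite -Heig HT !EFinD -Ej; apply: leeD2l; exact: (bigmax_sup j).
rewrite -!EFinB !lee_fin; lra.
Qed.

End EigenvectorOfTop.

Theorem lemma6p2 (R : realType) (n p : nat) (V : 'M[\bar R]_(n, p))
    (Vfin : forall i k, V i k != +oo)
    (Vrow : forall i, exists k, V i k != -oo)
    (Vcol : forall k, exists i, V i k != -oo)
    (u : 'I_n -> R) (lambda : R)
    (Heig : forall i, Top V u i = (lambda + u i)%:E) :
  hilbert (fun i => (u i)%:E) <= Wmax V.
Proof.
case: n V Vfin Vrow Vcol u Heig => [|n] V Vfin Vrow Vcol u Heig.
  by rewrite /hilbert !big_ord0 leNye.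
rewrite /hilbert.
have [M _ ->] := eq_bigmax ord0 xpredT (fun i => (u i)%:E) isT
  (fun i _ => leNye _).
have [m _ ->] := eq_bigmin ord0 xpredT (fun i => (u i)%:E) isT
  (fun i _ => leey _).
have [k Vmk HT] := Top_argmin u (Vrow m).
have lam0 := eigenvalue_nonpos Vfin (Vcol k) Heig.
apply: le_trans (hilbert_col_le_Wmax V k).
apply: le_trans (hilbert_ge (fun i => V i k) m M).
exact (eigenvector_gap_le Vfin M lam0 (Heig m) Vmk HT).
Qed.
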